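(* Let $\mathbf{P}_A,\mathbf{P}_B,\mathbf{Q}_A,\mathbf{Q}_B\in\mathbb{R}^{n\times n}$ be symmetric positive definite and for $\omega\in[0,1]$, $\bar\omega=1-\omega$, let $\mathbf{B}_{\mathrm{SCI}}(\omega)=\left(\omega(\mathbf{P}_A+\omega\mathbf{Q}_A)^{-1}+\bar\omega(\mathbf{P}_B+\bar\omega\mathbf{Q}_B)^{-1}\right)^{-1}$. Then the function $\omega\mapsto\operatorname{tr}(\mathbf{B}_{\mathrm{SCI}}(\omega))$ is convex on $[0,1]$. *)

From HB Require Import structures.
From mathcomp Require Import all_boot all_order all_algebra.
From mathcomp Require Import reals.
Set Implicit Arguments. Unset Strict Implicit. Unset Printing Implicit Defensive.
Import Order.TTheory GRing.Theory Num.Theory.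
Local Open Scope ring_scope.

Definition spd (R : realType) (n : nat) (A : 'M[R]_n) : Prop :=
  A^T = A /\ (forall v : 'cV[R]_n, v != 0 -> 0 < (v^T *m A *m v) 0 0).

Definition BSCI (R : realType) (n : nat) (PA PB QA QB : 'M[R]_n) (w : R)
  : 'M[R]_n :=
  invmx (w *: invmx (PA + w *: QA) + (1 - w) *: invmx (PB + (1 - w) *: QB)).

Definition convex_on_interval (R : realType) (a b : R) (f : R -> R) : Prop :=
  forall x y t : R, a <= x <= b -> a <= y <= b -> 0 <= t <= 1 ->
    f (t * x + (1 - t) * y) <= t * f x + (1 - t) * f y.

(** For a fixed vector v, the value vᵀ B_SCI(ω) v of the inverse of the
    weighted sum ω K_A⁻¹ + ω̄ K_B⁻¹ (with K_A = P_A + ω Q_A, K_B = P_B + ω̄ Q_B)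
    is the minimum of ω aᵀ K_A a + ω̄ bᵀ K_B b over all splittings
    v = ω a + ω̄ b.  Substituting c = ω a, the term ω aᵀ(P + ω Q)a becomes
    cᵀPc/ω + cᵀQc, the perspective of a convex quadratic plus a convex
    quadratic, hence jointly convex in (ω, c); partial minimisation over the
    linear constraint preserves convexity, so ω ↦ vᵀ B_SCI(ω) v is convex, and
    the trace is the sum of these functions over the standard basis. *)
From HB Require Import structures.
From mathcomp Require Import all_boot all_order all_algebra.
From mathcomp Require Import reals.
From mathcomp Require Import ring lra.
Set Implicit Arguments. Unset Strict Implicit. Unset Printing Implicit Defensive.
Import Order.TTheory GRing.Theory Num.Theory.
Local Open Scope ring_scope.

Section MatrixForm.
Variables (R : comNzRingType) (n : nat).
Implicit Types (A B : 'M[R]_n) (u w : 'cV[R]_n).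

Definition mxform A u w : R := (u^T *m A *m w) 0 0.

Lemma mxformDl A u1 u2 w : mxform A (u1 + u2) w = mxform A u1 w + mxform A u2 w.
Proof. by rewrite /mxform linearD /= !mulmxDl mxE. Qed.

Lemma mxformZl A c u w : mxform A (c *: u) w = c * mxform A u w.
Proof. by rewrite /mxform linearZ /= -!scalemxAl mxE. Qed.

Lemma mxformDr A u w1 w2 : mxform A u (w1 + w2) = mxform A u w1 + mxform A u w2.
Proof. by rewrite /mxform !mulmxDr mxE. Qed.

Lemma mxformZr A c u w : mxform A u (c *: w) = c * mxform A u w.
Proof. by rewrite /mxform -!scalemxAr mxE. Qed.

Lemma mxform0l A w : mxform A 0 w = 0.
Proof. by rewrite -(scale0r 0) mxformZl mul0r. Qed.

Lemma mxformDmx A B u w : mxform (A + B) u w = mxform A u w + mxform B u w.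
Proof. by rewrite /mxform mulmxDr mulmxDl mxE. Qed.

Lemma mxformZmx A c u w : mxform (c *: A) u w = c * mxform A u w.
Proof. by rewrite /mxform -scalemxAr -scalemxAl mxE. Qed.

Lemma mxform_trmx A u w : mxform A^T u w = mxform A w u.
Proof. by rewrite /mxform -[in LHS](trmxK w) -!trmx_mul mulmxA mxE. Qed.

Lemma mxform_mulmx A B u w : mxform (A *m B) u w = mxform A u (B *m w).
Proof. by rewrite /mxform !mulmxA. Qed.

Lemma mxform_sym A u w : A^T = A -> mxform A u w = mxform A w u.
Proof. by move=> symA; rewrite -{1}symA mxform_trmx. Qed.

Lemma mxform_sqrD A u w : A^T = A ->
  mxform A (u + w) (u + w) = mxform A u u + 2 * mxform A u w + mxform A w w.
Proof. by move=> symA; rewrite mxformDl !mxformDr (mxform_sym u w symA); ring. Qed.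

Lemma mxtrace_mxform A : \tr A = \sum_i mxform A (delta_mx i 0) (delta_mx i 0).
Proof. by apply: eq_bigr => i _; rewrite /mxform trmx_delta -rowE -colE !mxE. Qed.

End MatrixForm.

Section PositiveDefinite.
Variables (R : realFieldType) (n : nat).
Implicit Types (A B : 'M[R]_n) (u v w : 'cV[R]_n).

Definition posdef A := forall v, v != 0 -> 0 < mxform A v v.
Definition possemidef A := forall v, 0 <= mxform A v v.

Lemma posdefW A : posdef A -> possemidef A.
Proof.
move=> pdA v; have [->|v_neq0] := eqVneq v 0; first by rewrite mxform0l.
exact/ltW/pdA.
Qed.

Lemma posdef_unitmx A : posdef A -> A \in unitmx.
Proof.
move=> pdA; rewrite -unitmx_tr -row_free_unit -kermx_eq0.
apply/negPn/negP => /matrix0Pn [i [j kerA_ij]].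
set u := row i (kermx A^T).
have Au : A *m u^T = 0.
  by rewrite -(trmxK A) -trmx_mul /u -row_mul mulmx_ker row0 trmx0.
have uT_neq0 : u^T != 0.
  apply: contraNneq kerA_ij => uT0.
  by have := congr1 (fun M : 'cV_n => M j 0) uT0; rewrite !mxE => ->.
by have := pdA _ uT_neq0; rewrite /mxform -mulmxA Au mulmx0 mxE ltxx.
Qed.

Lemma mxform_invmx A u x : A \in unitmx ->
  mxform A u (invmx A *m x) = mxform 1%:M u x.
Proof. by move=> unitA; rewrite -mxform_mulmx mulmxV. Qed.

Lemma posdef_invmx A : posdef A -> posdef (invmx A).
Proof.
move=> pdA v v_neq0; have unitA := posdef_unitmx pdA.
have Av_neq0 : invmx A *m v != 0.
  by apply: contraNneq v_neq0 => Av0; rewrite -(mulKVmx unitA v) Av0 mulmx0.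
have := pdA _ Av_neq0; rewrite mxform_invmx // /mxform mulmx1 trmx_mul.
by rewrite -[(_ *m v) 0 0]/(mxform _ v v) mxform_trmx.
Qed.

Lemma posdef_comb A B a b : posdef A -> posdef B ->
  0 <= a -> 0 <= b -> 0 < a + b -> posdef (a *: A + b *: B).
Proof.
move=> pdA pdB a_ge0 b_ge0 ab_gt0 v v_neq0; rewrite mxformDmx !mxformZmx.
have A_gt0 := pdA v v_neq0; have B_gt0 := pdB v v_neq0.
have := mulr_ge0 a_ge0 (ltW A_gt0); have := mulr_ge0 b_ge0 (ltW B_gt0).
have [a_gt0|a_le0] := ltrP 0 a; first by have := mulr_gt0 a_gt0 A_gt0; lra.
have b_gt0 : 0 < b by lra.
by have := mulr_gt0 b_gt0 B_gt0; lra.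
Qed.

Lemma posdefDl A B c : posdef A -> possemidef B -> 0 <= c -> posdef (A + c *: B).
Proof.
move=> pdA psdB c_ge0 v v_neq0; rewrite mxformDmx mxformZmx.
by have := pdA v v_neq0; have := mulr_ge0 c_ge0 (psdB v); lra.
Qed.

Lemma mxform_comb_le A (p q : R) u w : possemidef A -> 0 <= p -> 0 <= q ->
  mxform A (p *: u + q *: w) (p *: u + q *: w)
    <= (p + q) * (p * mxform A u u + q * mxform A w w).
Proof.
move=> psdA p_ge0 q_ge0; rewrite -subr_ge0.
have -> : (p + q) * (p * mxform A u u + q * mxform A w w)
          - mxform A (p *: u + q *: w) (p *: u + q *: w)
          = p * q * mxform A (u - w) (u - w).
  by rewrite -scaleN1r !(mxformDl, mxformDr, mxformZl, mxformZr); ring.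
by rewrite !mulr_ge0.
Qed.

Lemma mxform_perspective_le A (p q : R) c u w : possemidef A -> 0 <= p -> 0 <= q ->
  (p + q) *: c = p *: u + q *: w ->
  (p + q) * mxform A c c <= p * mxform A u u + q * mxform A w w.
Proof.
move=> psdA p_ge0 q_ge0 def_c.
have [pq0|pq_neq0] := eqVneq (p + q) 0.
  have p0 : p = 0 by lra.
  have q0 : q = 0 by lra.
  by rewrite pq0 p0 q0 !mul0r addr0.
have pq_gt0 : 0 < p + q by rewrite lt0r pq_neq0 addr_ge0.
rewrite -(ler_pM2l pq_gt0) -mxformZl -[in leLHS]mxformZr def_c.
exact: mxform_comb_le.
Qed.

End PositiveDefinite.

Section ParallelSum.
Variables (R : realFieldType) (n : nat) (K L : 'M[R]_n) (a b : R).
Hypotheses (symK : K^T = K) (symL : L^T = L) (pdK : posdef K) (pdL : posdef L).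
Hypotheses (a_ge0 : 0 <= a) (b_ge0 : 0 <= b) (ab_gt0 : 0 < a + b).

Let S := a *: invmx K + b *: invmx L.
Let H := invmx S.
Let unitK : K \in unitmx := posdef_unitmx pdK.
Let unitL : L \in unitmx := posdef_unitmx pdL.
Implicit Types (v x y : 'cV[R]_n).

Lemma parallel_sum_unitmx : S \in unitmx.
Proof. by apply/posdef_unitmx/posdef_comb => //; apply: posdef_invmx. Qed.

Lemma parallel_sum_split v :
  a *: (invmx K *m (H *m v)) + b *: (invmx L *m (H *m v)) = v.
Proof. by rewrite !scalemxAl -mulmxDl mulmxA mulmxV ?parallel_sum_unitmx // mul1mx. Qed.

Lemma parallel_sum_form v :
  mxform H v v = a * mxform K (invmx K *m (H *m v)) (invmx K *m (H *m v))
               + b * mxform L (invmx L *m (H *m v)) (invmx L *m (H *m v)).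
Proof.
rewrite (mxform_sym _ (invmx K *m _) symK) (mxform_sym _ (invmx L *m _) symL).
rewrite !mxform_invmx // -!mxformZl -mxformDl parallel_sum_split.
by rewrite -mxform_mulmx mul1mx.
Qed.

(* The optimal splitting (x0, y0) satisfies K x0 = L y0 = H v, so the cross
   terms of any other splitting add up to 2 (a dx + b dy)ᵀ H v = 0. *)
Lemma parallel_sum_form_le v x y : a *: x + b *: y = v ->
  mxform H v v <= a * mxform K x x + b * mxform L y y.
Proof.
move=> def_v; set x0 := invmx K *m (H *m v); set y0 := invmx L *m (H *m v).
set dx := x - x0; set dy := y - y0.
have split_diff : a *: dx + b *: dy = 0.
  by rewrite !scalerBr addrACA -opprD parallel_sum_split def_v subrr.
have cross0 : a * mxform K dx x0 + b * mxform L dy y0 = 0.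
  by rewrite !mxform_invmx // -!mxformZl -mxformDl split_diff mxform0l.
have dx_ge0 := mulr_ge0 a_ge0 (posdefW pdK dx).
have dy_ge0 := mulr_ge0 b_ge0 (posdefW pdL dy).
have -> : x = dx + x0 by rewrite subrK.
have -> : y = dy + y0 by rewrite subrK.
rewrite parallel_sum_form -/x0 -/y0 (mxform_sqrD dx x0 symK) (mxform_sqrD dy y0 symL).
lra.
Qed.

End ParallelSum.

Lemma conic_comb_barycenter (R : realFieldType) (V : lmodType R) (p q : R) (u w : V) :
  0 <= p -> 0 <= q -> exists c, (p + q) *: c = p *: u + q *: w.
Proof.
move=> p_ge0 q_ge0; have [pq0|pq_neq0] := eqVneq (p + q) 0.
  have p0 : p = 0 by lra.
  have q0 : q = 0 by lra.
  by exists 0; rewrite pq0 p0 q0 !scale0r addr0.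
by exists ((p + q)^-1 *: (p *: u + q *: w)); rewrite scalerA mulfV // scale1r.
Qed.

Section WeightedForm.
Variables (R : realFieldType) (n : nat).
Implicit Types (P Q : 'M[R]_n) (u w c : 'cV[R]_n).

Definition weighted_form P Q (x : R) u := x * mxform (P + x *: Q) u u.

Lemma weighted_form_convex P Q (t x y : R) u w c :
  possemidef P -> possemidef Q -> 0 <= t <= 1 -> 0 <= x -> 0 <= y ->
  (t * x + (1 - t) * y) *: c = (t * x) *: u + ((1 - t) * y) *: w ->
  weighted_form P Q (t * x + (1 - t) * y) c
    <= t * weighted_form P Q x u + (1 - t) * weighted_form P Q y w.
Proof.
move=> psdP psdQ /andP[t_ge0 t_le1] x_ge0 y_ge0 def_c.
have tx_ge0 : 0 <= t * x by rewrite mulr_ge0.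
have ty_ge0 : 0 <= (1 - t) * y by rewrite mulr_ge0 ?subr_ge0.
have P_le := mxform_perspective_le psdP tx_ge0 ty_ge0 def_c.
have t'_ge0 : 0 <= 1 - t by rewrite subr_ge0.
have Q_le := mxform_comb_le (x *: u) (y *: w) psdQ t_ge0 t'_ge0.
rewrite !scalerA -def_c !(mxformZl, mxformZr) in Q_le.
rewrite /weighted_form !mxformDmx !mxformZmx.
set z := t * x + (1 - t) * y in P_le Q_le *.
rewrite subrKC mul1r in Q_le.
lra.
Qed.

End WeightedForm.

Section SCI.
Variables (R : realType) (n : nat) (PA PB QA QB : 'M[R]_n).
Implicit Types (P Q : 'M[R]_n).
Hypotheses (symPA : PA^T = PA) (symPB : PB^T = PB).
Hypotheses (symQA : QA^T = QA) (symQB : QB^T = QB).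
Hypotheses (pdPA : posdef PA) (pdPB : posdef PB).
Hypotheses (psdQA : possemidef QA) (psdQB : possemidef QB).

Let SCI_cost (w : R) u v :=
  weighted_form PA QA w u + weighted_form PB QB (1 - w) v.

Let sym_shift P Q (x : R) : P^T = P -> Q^T = Q -> (P + x *: Q)^T = P + x *: Q.
Proof. by move=> symP symQ; rewrite linearD linearZ /= symP symQ. Qed.

Lemma BSCI_form_le (w : R) u v x : 0 <= w <= 1 -> w *: u + (1 - w) *: v = x ->
  mxform (BSCI PA PB QA QB w) x x <= SCI_cost w u v.
Proof.
move=> /andP[w_ge0 w_le1] def_x; have w'_ge0 : 0 <= 1 - w by rewrite subr_ge0.
rewrite /SCI_cost /weighted_form.
by apply: parallel_sum_form_le def_x; rewrite ?sym_shift //; [apply: posdefDl..|lra].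
Qed.

Lemma BSCI_form_attained (w : R) x : 0 <= w <= 1 ->
  exists u v, w *: u + (1 - w) *: v = x /\
              mxform (BSCI PA PB QA QB w) x x = SCI_cost w u v.
Proof.
move=> /andP[w_ge0 w_le1]; have w'_ge0 : 0 <= 1 - w by rewrite subr_ge0.
have pdKA := posdefDl pdPA psdQA w_ge0.
have pdKB := posdefDl pdPB psdQB w'_ge0.
have ab_gt0 : 0 < w + (1 - w) by lra.
eexists; eexists; split; first exact: (parallel_sum_split pdKA pdKB).
by rewrite /SCI_cost /weighted_form -parallel_sum_form ?sym_shift.
Qed.

Lemma BSCI_form_convex (t x y : R) v : 0 <= t <= 1 -> 0 <= x <= 1 -> 0 <= y <= 1 ->
  mxform (BSCI PA PB QA QB (t * x + (1 - t) * y)) v v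
    <= t * mxform (BSCI PA PB QA QB x) v v + (1 - t) * mxform (BSCI PA PB QA QB y) v v.
Proof.
move=> t01 x01 y01; have [u1 [v1 [split1 ->]]] := BSCI_form_attained v x01.
have [u2 [v2 [split2 ->]]] := BSCI_form_attained v y01.
have /andP[t_ge0 t_le1] := t01.
move: x01 y01 => /andP[x_ge0 x_le1] /andP[y_ge0 y_le1].
have t'_ge0 : 0 <= 1 - t by rewrite subr_ge0.
have x'_ge0 : 0 <= 1 - x by rewrite subr_ge0.
have y'_ge0 : 0 <= 1 - y by rewrite subr_ge0.
have [c def_c] :=
  conic_comb_barycenter u1 u2 (mulr_ge0 t_ge0 x_ge0) (mulr_ge0 t'_ge0 y_ge0).
have [d def_d] :=
  conic_comb_barycenter v1 v2 (mulr_ge0 t_ge0 x'_ge0) (mulr_ge0 t'_ge0 y'_ge0).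
set z := t * x + (1 - t) * y in def_c *.
have z01 : 0 <= z <= 1.
  have := mulr_ge0 t_ge0 x'_ge0; have := mulr_ge0 t'_ge0 y'_ge0.
  by rewrite /z => *; apply/andP; split; nra.
have z' : 1 - z = t * (1 - x) + (1 - t) * (1 - y) by rewrite /z; ring.
have split_z : z *: c + (1 - z) *: d = v.
  rewrite z' def_c def_d.
  transitivity (t *: (x *: u1 + (1 - x) *: v1) + (1 - t) *: (y *: u2 + (1 - y) *: v2)).
    by rewrite !scalerDr !scalerA addrACA.
  by rewrite split1 split2 -scalerDl subrKC scale1r.
apply: le_trans (BSCI_form_le z01 split_z) _; rewrite /SCI_cost z'.
have := weighted_form_convex (posdefW pdPA) psdQA t01 x_ge0 y_ge0 def_c.
have := weighted_form_convex (posdefW pdPB) psdQB t01 x'_ge0 y'_ge0 def_d.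
lra.
Qed.

End SCI.

Theorem lemma6 (R : realType) (n : nat) (PA PB QA QB : 'M[R]_n) :
  spd PA -> spd PB -> spd QA -> spd QB ->
  convex_on_interval 0 1 (fun w : R => \tr (BSCI PA PB QA QB w)).
Proof.
move=> [symPA pdPA] [symPB pdPB] [symQA pdQA] [symQB pdQB] x y t x01 y01 t01.
rewrite !mxtrace_mxform !mulr_sumr -big_split /=; apply: ler_sum => i _.
exact: (BSCI_form_convex symPA symPB symQA symQB pdPA pdPB (posdefW pdQA) (posdefW pdQB)).
Qed.
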